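(* For every pair $X,Y$ of nominal sets, the sets $\mathrm{Kl}(\mathcal{P}_{\mathsf{fs}})(X,Y)$ and $\mathrm{Kl}(\mathcal{P}_{\mathsf{ufs}})(X,Y)$ of equivariant maps $X\to\mathcal{P}_{\mathsf{fs}}Y$, respectively $X\to\mathcal{P}_{\mathsf{ufs}}Y$, ordered pointwise by inclusion ($f\le g$ iff $f(x)\subseteq g(x)$ for all $x\in X$), form complete lattices (in particular dcpos with bottom).
   Context: Fix a countably infinite set $\mathbb{A}$ of names and let $\mathrm{Perm}(\mathbb{A})$ be the group of finite permutations of $\mathbb{A}$. A nominal set is a set $X$ with an action of $\mathrm{Perm}(\mathbb{A})$ such that every $x\in X$ has a finite support $S\subseteq\mathbb{A}$ (i.e. $\pi\cdot x=x$ whenever $\pi$ fixes $S$ pointwise); $\mathrm{supp}(x)$ denotes the least support. A map is equivariant if it commutes with the actions. A subset $A\subseteq X$ is finitely supported if it has a finite support for the action $\pi\cdot A=\{\pi\cdot x: x\in A\}$, and uniformly finitely supported if $\bigcup_{x\in A}\mathrm{supp}(x)$ is finite. $\mathcal{P}_{\mathsf{fs}}X$ (resp. $\mathcal{P}_{\mathsf{ufs}}X$) is the nominal set of finitely supported (resp. uniformly finitely supported) subsets of $X$; these are monads on the category $\mathsf{Nom}$ of nominal sets and equivariant maps, with unit $x\mapsto\{x\}$ and multiplication given by union. $\mathrm{Kl}(T)(X,Y)$ denotes the set of morphisms $X\to Y$ of the Kleisli category, i.e. equivariant maps $X\to TY$. *)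

From Stdlib Require Import List.
Import ListNotations.

Definition name := nat.

Record fperm := FPerm {
  pf : name -> name;
  pinv : name -> name;
  pinvK : forall a, pinv (pf a) = a;
  pfK : forall a, pf (pinv a) = a;
  pfin : exists S : list name, forall a, ~ In a S -> pf a = a
}.

Definition fperm_id : fperm.
Proof.
  refine (FPerm (fun a => a) (fun a => a) (fun _ => eq_refl) (fun _ => eq_refl) _).
  exists nil; auto.
Defined.

Definition fperm_comp (p q : fperm) : fperm.
Proof.
  refine (FPerm (fun a => pf p (pf q a)) (fun a => pinv q (pinv p a)) _ _ _).
  - intro a; rewrite pinvK, pinvK; reflexivity.
  - intro a; rewrite pfK, pfK; reflexivity.
  - destruct (pfin p) as [S HS], (pfin q) as [T HT].
    exists (S ++ T); intros a Ha.
    rewrite HT, HS; auto; intro H; apply Ha; apply in_or_app; auto.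
Defined.

Definition fixes (p : fperm) (S : list name) : Prop :=
  forall a, In a S -> pf p a = a.

Record nominal := Nominal {
  carrier :> Type;
  act : fperm -> carrier -> carrier;
  act_ext : forall p q x, (forall a, pf p a = pf q a) -> act p x = act q x;
  act_id : forall x, act fperm_id x = x;
  act_comp : forall p q x, act (fperm_comp p q) x = act p (act q x);
  act_fin : forall x, exists S : list name,
      forall p, fixes p S -> act p x = x
}.

Definition supports (X : nominal) (S : list name) (x : X) : Prop :=
  forall p, fixes p S -> act X p x = x.

(** Least support: intersection of all finite supports. *)
Definition in_supp (X : nominal) (x : X) (a : name) : Prop :=
  forall S, supports X S x -> In a S.

Definition subset_of (X : nominal) := X -> Prop.

Definition act_set (X : nominal) (p : fperm) (A : subset_of X) : subset_of X :=
  fun y => exists x, A x /\ y = act X p x.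

Definition set_eq (X : nominal) (A B : subset_of X) : Prop :=
  forall y, A y <-> B y.

Definition fs_set (X : nominal) (A : subset_of X) : Prop :=
  exists S : list name, forall p, fixes p S -> set_eq X (act_set X p A) A.

Definition ufs_set (X : nominal) (A : subset_of X) : Prop :=
  exists S : list name, forall x, A x -> forall a, in_supp X x a -> In a S.

Definition equivariant_rel (X Y : nominal) (f : X -> subset_of Y) : Prop :=
  forall p x, set_eq Y (f (act X p x)) (act_set Y p (f x)).

Definition kl_fs (X Y : nominal) (f : X -> subset_of Y) : Prop :=
  equivariant_rel X Y f /\ forall x, fs_set Y (f x).

Definition kl_ufs (X Y : nominal) (f : X -> subset_of Y) : Prop :=
  equivariant_rel X Y f /\ forall x, ufs_set Y (f x).

Definition kl_le (X Y : nominal) (f g : X -> subset_of Y) : Prop :=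
  forall x y, f x y -> g x y.

Definition complete_lattice_on (X Y : nominal) (K : (X -> subset_of Y) -> Prop) : Prop :=
  forall F : (X -> subset_of Y) -> Prop, (forall f, F f -> K f) ->
    (exists s, K s /\ (forall f, F f -> kl_le X Y f s) /\
       (forall u, K u -> (forall f, F f -> kl_le X Y f u) -> kl_le X Y s u)) /\
    (exists m, K m /\ (forall f, F f -> kl_le X Y m f) /\
       (forall l, K l -> (forall f, F f -> kl_le X Y l f) -> kl_le X Y l m)).

(* Both hom-sets are closed under arbitrary pointwise unions, and a poset with
   all joins is a complete lattice (a meet is the join of all lower bounds).
   Unions preserve equivariance, and finite support is automatic for an
   equivariant map, since any support of x supports f x.  For P_ufs the point is
   that every element y of a uniformly finitely supported set supported by S has
   supp y inside S: swapping a name of supp y outside S with a fresh name keeps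
   the set fixed, so the swapped y lies in the set and has the fresh name in its
   support.  Hence a P_ufs-morphism satisfies supp y ⊆ supp x for y in f x, a
   condition stable under unions. *)

From Stdlib Require Import List Arith Lia.
Import ListNotations.

Set Implicit Arguments.
Unset Strict Implicit.

Definition fperm_inv (p : fperm) : fperm.
Proof.
  refine (FPerm (pinv p) (pf p) (pfK p) (pinvK p) _).
  destruct (pfin p) as [S HS]; exists S; intros a Ha.
  rewrite <- (HS a Ha) at 1; apply pinvK.
Defined.

Lemma act_invK (X : nominal) (p : fperm) (x : X) :
  act X (fperm_inv p) (act X p x) = x.
Proof.
  rewrite <- act_comp, (act_ext X _ fperm_id); [apply act_id|].
  intro a; apply pinvK.
Qed.

Definition swap_name (a b c : name) : name :=
  if Nat.eq_dec c a then b else if Nat.eq_dec c b then a else c.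

Lemma swap_nameK (a b c : name) : swap_name a b (swap_name a b c) = c.
Proof.
  unfold swap_name.
  destruct (Nat.eq_dec c a), (Nat.eq_dec c b); subst;
    repeat (destruct Nat.eq_dec; subst); congruence.
Qed.

Definition swap (a b : name) : fperm.
Proof.
  refine (FPerm (swap_name a b) (swap_name a b) (swap_nameK a b) (swap_nameK a b) _).
  exists [a; b]; intros c Hc; unfold swap_name.
  destruct (Nat.eq_dec c a), (Nat.eq_dec c b); subst; simpl in Hc; tauto.
Defined.

Lemma swap_l (a b : name) : pf (swap a b) a = b.
Proof. simpl; unfold swap_name; destruct (Nat.eq_dec a a); congruence. Qed.

Lemma swap_fixes (a b : name) (S : list name) :
  ~ In a S -> ~ In b S -> fixes (swap a b) S.
Proof.
  intros Ha Hb c Hc; simpl; unfold swap_name.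
  destruct (Nat.eq_dec c a), (Nat.eq_dec c b); subst; tauto.
Qed.

Lemma exists_fresh (l : list name) : exists b, ~ In b l.
Proof.
  exists (S (list_max l)); intro H.
  assert (Hle := proj1 (list_max_le l (list_max l)) (le_n _)).
  rewrite Forall_forall in Hle; specialize (Hle _ H); lia.
Qed.

Lemma in_supp_act (X : nominal) (x : X) (a : name) (p : fperm) :
  in_supp X x a -> in_supp X (act X p x) (pf p a).
Proof.
  intros Ha S HS.
  assert (Hx : supports X (map (pinv p) S) x).
  { intros q Hq.
    (* q fixes p^-1 S, so its conjugate p q p^-1 fixes S. *)
    set (r := fperm_comp p (fperm_comp q (fperm_inv p))).
    assert (Hr : act X q x = act X (fperm_inv p) (act X r (act X p x))).
    { unfold r; rewrite <- !act_comp; apply act_ext.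
      intro c; simpl; rewrite !pinvK; reflexivity. }
    rewrite Hr, (HS r); [apply act_invK|].
    intros s Hs; unfold r; simpl; rewrite Hq; [apply pfK|apply in_map, Hs]. }
  destruct (proj1 (in_map_iff _ _ _) (Ha _ Hx)) as [s [<- Hs]].
  rewrite pfK; exact Hs.
Qed.

Definition set_supports (Y : nominal) (S : list name) (A : subset_of Y) : Prop :=
  forall p, fixes p S -> set_eq Y (act_set Y p A) A.

Lemma ufs_set_in_supp (Y : nominal) (A : subset_of Y) (S : list name) (y : Y) (a : name) :
  set_supports S A -> ufs_set Y A -> A y -> in_supp Y y a -> In a S.
Proof.
  intros HS [T HT] Hy Ha.
  destruct (in_dec Nat.eq_dec a S) as [|HaS]; [assumption|exfalso].
  destruct (exists_fresh (a :: S ++ T)) as [b Hb].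
  assert (HbS : ~ In b S) by (intro; apply Hb; right; apply in_or_app; auto).
  assert (Hsw : A (act Y (swap a b) y)).
  { apply (HS _ (swap_fixes HaS HbS)); exists y; auto. }
  assert (Hsupp := in_supp_act (p := swap a b) Ha); rewrite swap_l in Hsupp.
  apply Hb; right; apply in_or_app; right; exact (HT _ Hsw _ Hsupp).
Qed.

Lemma equivariant_set_supports (X Y : nominal) (f : X -> subset_of Y) (S : list name) (x : X) :
  equivariant_rel X Y f -> supports X S x -> set_supports S (f x).
Proof. intros Hf HS p Hp y; rewrite <- (Hf p x y), (HS p Hp); reflexivity. Qed.

Lemma equivariant_fs_set (X Y : nominal) (f : X -> subset_of Y) (x : X) :
  equivariant_rel X Y f -> fs_set Y (f x).
Proof.
  intro Hf; destruct (act_fin X x) as [S HS].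
  exists S; exact (equivariant_set_supports Hf HS).
Qed.

Lemma kl_ufs_in_supp (X Y : nominal) (f : X -> subset_of Y) (x : X) (y : Y) (a : name) :
  kl_ufs X Y f -> f x y -> in_supp Y y a -> in_supp X x a.
Proof.
  intros [Hf Hu] Hy Ha S HS.
  exact (ufs_set_in_supp (equivariant_set_supports Hf HS) (Hu x) Hy Ha).
Qed.

Section Unions.

Variables X Y : nominal.

Definition kl_union (F : (X -> subset_of Y) -> Prop) : X -> subset_of Y :=
  fun x y => exists f, F f /\ f x y.

Definition union_closed (K : (X -> subset_of Y) -> Prop) : Prop :=
  forall F, (forall f, F f -> K f) -> K (kl_union F).

Lemma union_closed_complete_lattice (K : (X -> subset_of Y) -> Prop) :
  union_closed K -> complete_lattice_on X Y K.
Proof.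
  intros HK F HF; split.
  - exists (kl_union F); repeat split.
    + exact (HK F HF).
    + intros f Ff x y Hy; exists f; auto.
    + intros u _ Hu x y [f [Ff Hy]]; exact (Hu f Ff x y Hy).
  - exists (kl_union (fun l => K l /\ forall f, F f -> kl_le X Y l f)); repeat split.
    + apply HK; tauto.
    + intros f Ff x y [l [[_ Hl] Hy]]; exact (Hl f Ff x y Hy).
    + intros l Kl Hl x y Hy; exists l; auto.
Qed.

Lemma equivariant_union (F : (X -> subset_of Y) -> Prop) :
  (forall f, F f -> equivariant_rel X Y f) -> equivariant_rel X Y (kl_union F).
Proof.
  intros HF p x y; split.
  - intros [f [Ff Hy]].
    destruct (proj1 (HF f Ff p x y) Hy) as [z [Hz ->]].
    exists z; split; [exists f|]; auto.
  - intros [z [[f [Ff Hz]] ->]].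
    exists f; split; [|apply (HF f Ff p x); exists z]; auto.
Qed.

Lemma kl_fs_union_closed : union_closed (kl_fs X Y).
Proof.
  intros F HF.
  assert (Hu := equivariant_union (fun f Ff => proj1 (HF f Ff))).
  split; [exact Hu|intro x; exact (equivariant_fs_set x Hu)].
Qed.

Lemma kl_ufs_union_closed : union_closed (kl_ufs X Y).
Proof.
  intros F HF; split.
  - exact (equivariant_union (fun f Ff => proj1 (HF f Ff))).
  - intro x; destruct (act_fin X x) as [S HS]; exists S.
    intros y [f [Ff Hy]] a Ha; exact (kl_ufs_in_supp (HF f Ff) Hy Ha HS).
Qed.

End Unions.

Theorem proposition3p7 (X Y : nominal) :
  complete_lattice_on X Y (kl_fs X Y) /\ complete_lattice_on X Y (kl_ufs X Y).
Proof.
  split; apply union_closed_complete_lattice.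
  - apply kl_fs_union_closed.
  - apply kl_ufs_union_closed.
Qed.
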